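(* Let $p_{C_0}(z,w)=\left(-z(w^2-4w+1)+w^2+4w+1\right)^2$. Then $$2\pi\,\mathrm{m}(p_{C_0})=16\,D\!\left((2+\sqrt3)i\right)+\frac{8\pi}{3}\log(2+\sqrt3),$$ and in particular $20\,v_{\mathrm{tet}}<2\pi\,\mathrm{m}(p_{C_0})$.
   Context: Mahler measure: $\mathrm{m}(P)=\frac{1}{(2\pi i)^2}\int_{|z|=|w|=1}\log|P(z,w)|\frac{dz}{z}\frac{dw}{w}$. $D$ is the Bloch–Wigner dilogarithm $D(z)=\operatorname{Im}(\mathrm{Li}_2(z))+\arg(1-z)\log|z|$, $\mathrm{Li}_2(z)=-\int_0^z\frac{\log(1-t)}{t}dt$. $v_{\mathrm{tet}}=D(e^{i\pi/3})\approx1.01494$. *)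

From Stdlib Require Import Reals.
Open Scope R_scope.

Definition C : Type := (R * R)%type.
Definition Cof (r : R) : C := (r, 0).
Definition Cadd (a b : C) : C := (fst a + fst b, snd a + snd b).
Definition Copp (a : C) : C := (- fst a, - snd a).
Definition Csub (a b : C) : C := Cadd a (Copp b).
Definition Cmul (a b : C) : C :=
  (fst a * fst b - snd a * snd b, fst a * snd b + snd a * fst b).
Definition Cscal (r : R) (a : C) : C := (r * fst a, r * snd a).
Definition Cnorm (a : C) : R := sqrt (fst a ^ 2 + snd a ^ 2).
Definition cexp (t : R) : C := (cos t, sin t).

(* Principal argument in (-pi, pi] (with Arg 0 = 0);
   this is Im of the principal complex logarithm. *)
Definition Arg (a : C) : R :=
  let x := fst a in let y := snd a in
  match Rlt_dec 0 x with
  | left _ => atan (y / x)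
  | right _ =>
    match Rlt_dec x 0 with
    | left _ => match Rle_dec 0 y with
                | left _ => atan (y / x) + PI
                | right _ => atan (y / x) - PI
                end
    | right _ =>
      match Rlt_dec 0 y with
      | left _ => PI / 2
      | right _ => match Rlt_dec y 0 with
                   | left _ => - (PI / 2)
                   | right _ => 0
                   end
      end
    end
  end.

Definition is_RInt (f : R -> R) (a b l : R) : Prop :=
  exists pr : Riemann_integrable f a b, RiemannInt pr = l.

(* Mahler measure of a two-variable function P (a polynomial):
   m(P) = (1/(2 pi)^2) \int_0^{2pi}\int_0^{2pi} log|P(e^{i th}, e^{i ph})| dph dth.
   Since log|P| may have logarithmic singularities on the torus, the
   (Lebesgue) integral is expressed as the limit, as eps -> 0+, of the
   (Riemann, iterated) integrals of the continuous truncations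
   log(max(|P|, eps)); by monotone convergence this is the Lebesgue integral. *)
Definition is_mahler_measure (P : C -> C -> C) (m : R) : Prop :=
  exists I : R -> R,
    (forall eps, 0 < eps ->
       exists G : R -> R,
         (forall th, 0 <= th <= 2 * PI ->
            is_RInt (fun ph => ln (Rmax eps (Cnorm (P (cexp th) (cexp ph)))))
                    0 (2 * PI) (G th)) /\
         is_RInt G 0 (2 * PI) (I eps)) /\
    (forall e, 0 < e -> exists d, 0 < d /\
       forall eps, 0 < eps < d -> Rabs (I eps / (2 * PI) ^ 2 - m) < e).

(* Im Li_2(z) = - Im \int_0^z log(1-t)/t dt, along the straight segment
   t = s z, s in [0,1]: Im Li_2(z) = - \int_0^1 Arg(1 - s z) / s ds. *)
Definition is_ImLi2 (z : C) (v : R) : Prop :=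
  is_RInt (fun s => - (Arg (Csub (Cof 1) (Cscal s z)) / s)) 0 1 v.

Definition is_BlochWigner (z : C) (v : R) : Prop :=
  exists li, is_ImLi2 z li /\ v = li + Arg (Csub (Cof 1) z) * ln (Cnorm z).

Definition pC0 (z w : C) : C :=
  let w2 := Cmul w w in
  let q := Cadd (Copp (Cmul z (Cadd (Csub w2 (Cscal 4 w)) (Cof 1))))
                (Cadd (Cadd w2 (Cscal 4 w)) (Cof 1)) in
  Cmul q q.

(* On the torus, [pC0] is the square of a factor whose squared modulus is
   [A + B cos th] with [A = 32 + 8 cos^2 ph] and [B = 32 - 8 cos^2 ph], so
   Jensen's formula evaluates the [th]-integral and
   [2 pi m(pC0) = int_0^{2 pi} 2 ln (4 + 2 |cos ph|) dph].  The logarithmic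
   singularities of the integrand are controlled by squeezing [ln (max eps F)]
   between shifted logarithms whose integrals Jensen's formula also computes.
   With [y = 2 - sqrt 3] one has [4 + 2 cos ph = |1 + y e^{i ph}|^2 / y], and the
   quarter-period integral of [ln |1 + y e^{i ph}|^2] is [2 Ti2 y], where [Ti2] is
   the inverse tangent integral.  The inversion formula
   [Ti2 k = Ti2 (1/k) + (pi/2) ln k] for [k = 2 + sqrt 3 = 1/y], together with
   [D (i k) = Ti2 k - (5 pi/12) ln k], gives the identity.  The inequality is
   numerical: Taylor bounds for [atan] and [ln], and a polynomial majorant of the
   integrand of [v_tet = Im Li2 (e^{i pi/3})]. *)

From Pilot Require Import Defs.
From Stdlib Require Import Reals Lra.
From Coquelicot Require Import Coquelicot.
Open Scope R_scope.

Lemma is_RInt_Riemann (f : R -> R) a b l : is_RInt f a b l -> Defs.is_RInt f a b l.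
Proof.
  intros H. assert (E : ex_RInt f a b) by (exists l; exact H).
  exists (ex_RInt_Reals_0 _ _ _ E). rewrite <- RInt_Reals. now apply is_RInt_unique.
Qed.

(* Coquelicot states these for a generic normed module, with [plus], [minus],
   [opp] and [scal]; the real forms below rewrite with [+], [-] and [*]. *)
Lemma RInt_correctR (f : R -> R) a b : ex_RInt f a b -> is_RInt f a b (RInt f a b).
Proof. exact (RInt_correct (V := R_CompleteNormedModule) f a b). Qed.
Lemma RInt_plusR (f g : R -> R) a b : ex_RInt f a b -> ex_RInt g a b ->
  RInt (fun x => f x + g x) a b = RInt f a b + RInt g a b.
Proof. exact (RInt_plus f g a b). Qed.
Lemma RInt_minusR (f g : R -> R) a b : ex_RInt f a b -> ex_RInt g a b ->
  RInt (fun x => f x - g x) a b = RInt f a b - RInt g a b.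
Proof. exact (RInt_minus f g a b). Qed.
Lemma RInt_scalR (f : R -> R) a b l : ex_RInt f a b ->
  RInt (fun x => l * f x) a b = l * RInt f a b.
Proof. exact (RInt_scal f a b l). Qed.
Lemma RInt_oppR (f : R -> R) a b : ex_RInt f a b -> RInt (fun x => - f x) a b = - RInt f a b.
Proof. exact (RInt_opp f a b). Qed.
Lemma RInt_constR a b c : RInt (fun _ => c) a b = (b - a) * c.
Proof. exact (RInt_const a b c). Qed.
Lemma RInt_swapR (f : R -> R) a b : ex_RInt f a b -> RInt f b a = - RInt f a b.
Proof. intros H. symmetry. exact (opp_RInt_swap f a b H). Qed.
Lemma ex_RInt_minusR (f g : R -> R) a b : ex_RInt f a b -> ex_RInt g a b ->
  ex_RInt (fun x => f x - g x) a b.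
Proof. exact (ex_RInt_minus f g a b). Qed.
Lemma ex_RInt_scalR (f : R -> R) a b l : ex_RInt f a b -> ex_RInt (fun x => l * f x) a b.
Proof. exact (ex_RInt_scal f a b l). Qed.
Lemma is_derive_minusR (f g : R -> R) x df dg : is_derive f x df -> is_derive g x dg ->
  is_derive (fun t => f t - g t) x (df - dg).
Proof. exact (is_derive_minus f g x df dg). Qed.
Lemma is_derive_scalR (f : R -> R) x c df : is_derive f x df ->
  is_derive (fun t => c * f t) x (c * df).
Proof. exact (is_derive_scal f x c df). Qed.

(* Coquelicot often leaves real equations typed in a structure whose carrier
   is [R]; [ring] and [field] need the type syntactically equal to [R]. *)
Ltac to_R := match goal with |- @eq _ ?a ?b => change (@eq R a b) end.

Lemma ex_RInt_continuity (f : R -> R) a b :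
  (forall x, continuity_pt f x) -> ex_RInt f a b.
Proof.
  intros H. apply (@ex_RInt_continuous R_CompleteNormedModule). intros z _.
  apply continuity_pt_filterlim, H.
Qed.

Lemma ex_RInt_derive (f : R -> R) a b : (forall x, ex_derive f x) -> ex_RInt f a b.
Proof.
  intros H. apply ex_RInt_continuity. intros x.
  apply continuity_pt_filterlim, (ex_derive_continuous f), H.
Qed.

Lemma RInt_primitive (F f : R -> R) a b :
  (forall x, is_derive F x (f x)) -> (forall x, ex_derive f x) -> RInt f a b = F b - F a.
Proof.
  intros HF Hf. apply is_RInt_unique, (is_RInt_derive F f); intros x _; auto.
  apply (ex_derive_continuous (V := R_NormedModule) f), Hf.
Qed.

Lemma eq_of_is_derive_0 (f : R -> R) a b :
  (forall t, Rmin a b <= t <= Rmax a b -> is_derive f t 0) -> f a = f b.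
Proof.
  intros H. destruct (Rtotal_order a b) as [Hab|[<-|Hab]]; [| reflexivity |].
  - apply eq_is_derive; [intros t Ht; apply H; rewrite Rmin_left, Rmax_right|]; lra.
  - symmetry. apply eq_is_derive; [intros t Ht; apply H; rewrite Rmin_right, Rmax_left|]; lra.
Qed.

Lemma eq_of_is_derive_0_open (f : R -> R) a b :
  (forall t, Rmin a b < t < Rmax a b -> is_derive f t 0) ->
  (forall t, Rmin a b <= t <= Rmax a b -> continuity_pt f t) -> f a = f b.
Proof.
  intros Hd Hc. destruct (MVT_gen f a b (fun _ => 0) Hd Hc) as [c [_ E]]. lra.
Qed.

Lemma le_of_is_derive_nonneg (f df : R -> R) a b : a <= b ->
  (forall x, a <= x <= b -> is_derive f x (df x)) ->
  (forall x, a <= x <= b -> 0 <= df x) -> f a <= f b.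
Proof.
  intros Hab Hd Hp. destruct (Req_dec a b) as [->|Hne]; [lra|].
  destruct (MVT_gen f a b df) as [c [Hc E]]; rewrite ?Rmin_left, ?Rmax_right in * by lra.
  - intros x Hx. apply Hd. lra.
  - intros x Hx. apply continuity_pt_filterlim, (ex_derive_continuous f).
    eexists. apply Hd. lra.
  - assert (0 <= df c) by (apply Hp; lra). nra.
Qed.

Lemma continuity_2d_pt_fun1 (f : R -> R -> R) x y :
  continuity_2d_pt f x y -> continuity_pt (fun u => f u y) x.
Proof.
  intros H eps Heps. destruct (H (mkposreal eps Heps)) as [d Hd].
  exists d. split; [apply cond_pos|]. intros v [_ Hv].
  apply Hd; simpl; [exact Hv | rewrite Rminus_eq_0, Rabs_R0; apply cond_pos].
Qed.

Lemma continuity_2d_pt_fun2 (f : R -> R -> R) x y :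
  continuity_2d_pt f x y -> continuity_pt (fun v => f x v) y.
Proof.
  intros H eps Heps. destruct (H (mkposreal eps Heps)) as [d Hd].
  exists d. split; [apply cond_pos|]. intros v [_ Hv].
  apply Hd; simpl; [rewrite Rminus_eq_0, Rabs_R0; apply cond_pos | exact Hv].
Qed.

Lemma continuity_2d_pt_swap (f : R -> R -> R) x y :
  continuity_2d_pt f x y -> continuity_2d_pt (fun u v => f v u) y x.
Proof. intros H eps. destruct (H eps) as [d Hd]. exists d. intros u v Hu Hv. auto. Qed.

Ltac continuity_2d := repeat first
  [ apply continuity_2d_pt_plus | apply continuity_2d_pt_mult
  | apply continuity_2d_pt_minus | apply continuity_2d_pt_opp
  | apply continuity_2d_pt_const | apply continuity_2d_pt_id1 | apply continuity_2d_pt_id2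
  | apply (continuity_1d_2d_pt_comp cos (fun u v => v)); [apply continuity_cos|]
  | apply (continuity_1d_2d_pt_comp cos (fun u v => u)); [apply continuity_cos|] ].

Section ParametricIntegral.

Variable f : R -> R -> R.
Hypothesis f_cont : forall x y, continuity_2d_pt f x y.

Lemma ex_RInt_param x a b : ex_RInt (f x) a b.
Proof.
  apply ex_RInt_continuity. intros y. apply (continuity_2d_pt_fun2 f), f_cont.
Qed.

Lemma continuity_pt_RInt_param_le a b x0 : a <= b ->
  continuity_pt (fun x => RInt (f x) a b) x0.
Proof.
  intros Hab eps Heps.
  assert (Hp : 0 < eps / (b - a + 1)) by (apply Rdiv_lt_0_compat; lra).
  destruct (uniform_continuity_2d_1d' f a b x0 (fun y _ => f_cont x0 y)
              (mkposreal _ Hp)) as [d Hd].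
  exists d. split; [apply cond_pos|]. intros x [_ Hx]. simpl in *. unfold Rdist in *.
  rewrite <- RInt_minusR by apply ex_RInt_param.
  eapply Rle_lt_trans.
  - apply abs_RInt_le_const with (M := eps / (b - a + 1)); [lra | |].
    + apply ex_RInt_minusR; apply ex_RInt_param.
    + intros t Ht. left. apply (Hd t x0 t x); auto.
      * pose proof (cond_pos d). lra.
      * assert (Hx' : Rabs (x - x0) <= d) by lra.
        apply Rabs_le_between in Hx'. lra.
      * rewrite Rminus_eq_0, Rabs_R0. apply cond_pos.
  - apply Rlt_le_trans with ((b - a + 1) * (eps / (b - a + 1))).
    + apply Rmult_lt_compat_r; lra.
    + right. field. lra.
Qed.

Lemma continuity_pt_RInt_param a b x0 : continuity_pt (fun x => RInt (f x) a b) x0.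
Proof.
  destruct (Rle_dec a b) as [H|H]; [now apply continuity_pt_RInt_param_le|].
  apply continuity_pt_ext with (f := fun x => - RInt (f x) b a).
  - intros x. rewrite RInt_swapR by apply ex_RInt_param. ring.
  - apply continuity_pt_opp with (f := fun x => RInt (f x) b a).
    apply continuity_pt_RInt_param_le. lra.
Qed.

End ParametricIntegral.

(* Both iterated integrals have derivative [RInt (fun y => f t y) c d] in the
   upper bound [t] of the [x]-integration, and they agree at [t = a]. *)
Lemma RInt_fubini (f : R -> R -> R) a b c d : (forall x y, continuity_2d_pt f x y) ->
  RInt (fun x => RInt (fun y => f x y) c d) a b =
  RInt (fun y => RInt (fun x => f x y) a b) c d.
Proof.
  intros Hf.
  set (g := fun x => RInt (fun y => f x y) c d).
  assert (Hf' : forall x y, continuity_2d_pt (fun y x => f x y) x y)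
    by (intros; apply (continuity_2d_pt_swap f), Hf).
  assert (g_cont : forall x, continuity_pt g x) by (intros; now apply continuity_pt_RInt_param).
  assert (dg : forall t, is_derive (fun t => RInt g a t) t (g t)).
  { intros t. apply (is_derive_RInt g _ a t).
    - apply filter_forall. intros b0. apply RInt_correctR, ex_RInt_continuity, g_cont.
    - apply continuity_pt_filterlim, g_cont. }
  assert (dfx : forall y t, is_derive (fun u => RInt (fun x => f x y) a u) t (f t y)).
  { intros y t. apply (is_derive_RInt (fun x => f x y) _ a t).
    - apply filter_forall. intros b0. apply RInt_correctR. now apply (ex_RInt_param (fun y x => f x y)).
    - apply continuity_pt_filterlim, (continuity_2d_pt_fun1 f), Hf. }
  assert (dh : forall t, is_derive (fun t => RInt (fun y => RInt (fun x => f x y) a t) c d) t (g t)).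
  { intros t.
    replace (g t) with (RInt (fun y => Derive (fun u => RInt (fun x => f x y) a u) t) c d).
    2:{ apply RInt_ext. intros y _. apply is_derive_unique, dfx. }
    apply (is_derive_RInt_param (fun t y => RInt (fun x => f x y) a t) c d t).
    - apply filter_forall. intros x0 y _. eexists. apply dfx.
    - intros y _. apply continuity_2d_pt_ext with (f := f); [|apply Hf].
      intros u v. symmetry. apply is_derive_unique, dfx.
    - apply filter_forall. intros y. apply ex_RInt_continuity. intros x.
      now apply (continuity_pt_RInt_param (fun y x => f x y)). }
  assert (E : RInt g a a - RInt (fun y => RInt (fun x => f x y) a a) c d =
              RInt g a b - RInt (fun y => RInt (fun x => f x y) a b) c d).
  { apply (eq_of_is_derive_0 (fun t => RInt g a t - RInt (fun y => RInt (fun x => f x y) a t) c d)).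
    intros t _. replace 0 with (g t - g t) by ring. now apply is_derive_minusR. }
  rewrite RInt_point, (RInt_ext _ (fun _ => 0)), RInt_constR in E
    by (intros; exact (RInt_point a (fun x => f x _))).
  change (@zero R_CompleteNormedModule) with 0 in E. unfold g in *. lra.
Qed.

Lemma RInt_shift (f : R -> R) a b c : (forall x, continuity_pt f x) ->
  RInt f (a + c) (b + c) = RInt (fun y => f (y + c)) a b.
Proof.
  intros Hf. assert (K := RInt_comp_lin f 1 c a b).
  replace (1 * a + c) with (a + c) in K by ring. replace (1 * b + c) with (b + c) in K by ring.
  rewrite <- K by now apply ex_RInt_continuity. apply RInt_ext. intros x _.
  change (1 * f (1 * x + c) = f (x + c)). rewrite !Rmult_1_l. reflexivity.
Qed.

Lemma RInt_reflect (f : R -> R) a b c : (forall x, continuity_pt f x) ->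
  RInt f (c - b) (c - a) = RInt (fun y => f (c - y)) a b.
Proof.
  intros Hf. assert (K := RInt_comp_lin f (-1) c a b).
  replace (-1 * a + c) with (c - a) in K by ring. replace (-1 * b + c) with (c - b) in K by ring.
  rewrite RInt_swapR, <- K by now apply ex_RInt_continuity.
  assert (ex : ex_RInt (fun y => f (c - y)) a b).
  { apply ex_RInt_continuity. intros x. apply (continuity_pt_comp (fun y => c - y) f); auto.
    apply continuity_pt_minus; [apply continuity_pt_const; now intros ? ? | apply continuity_pt_id]. }
  rewrite (RInt_ext _ (fun y => - f (c - y))).
  - rewrite RInt_oppR by exact ex.
    change (- - RInt (fun y => f (c - y)) a b = RInt (fun y => f (c - y)) a b). ring.
  - intros x _. replace (-1 * x + c) with (c - x) by ring.
    change (-1 * f (c - x) = - f (c - x)). ring.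
Qed.

(** * Jensen's formula for [A + B cos] *)

Lemma one_add_mul_pos t c : Rabs t < 1 -> -1 <= c <= 1 -> 0 < 1 + t * c.
Proof.
  intros Ht Hc. destruct (Rle_dec 0 t).
  - rewrite Rabs_pos_eq in Ht by lra. nra.
  - rewrite Rabs_left in Ht by lra. nra.
Qed.

Lemma one_add_sqr_add_pos t c : 0 < 1 + t * c -> -1 <= c <= 1 -> 0 < 1 + t^2 + 2*t*c.
Proof.
  intros H Hc.
  assert (0 <= t^2 * (1 - c^2)) by (apply Rmult_le_pos; nra).
  replace (1 + t^2 + 2*t*c) with ((1 + t*c)^2 + t^2 * (1 - c^2)) by ring.
  assert (0 < (1 + t*c)^2) by (apply pow_lt; lra). lra.
Qed.

Lemma cos_bound x : -1 <= cos x <= 1.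
Proof. split; apply COS_bound. Qed.

Lemma one_add_sqr_cos_pos t p : Rabs t < 1 -> 0 < 1 + t^2 + 2*t*cos p.
Proof.
  intros Ht. pose proof (cos_bound p).
  apply one_add_sqr_add_pos; [apply one_add_mul_pos|]; auto.
Qed.

Definition log_cos_int a b t : R := RInt (fun p => ln (1 + t^2 + 2*t*cos p)) a b.

Definition log_cos_kernel t p : R := (2*t + 2*cos p) / (1 + t^2 + 2*t*cos p).

Lemma ln_one_add_sqr_cos_derive t p : 0 < 1 + t^2 + 2*t*cos p ->
  is_derive (fun u => ln (1 + u^2 + 2*u*cos p)) t (log_cos_kernel t p).
Proof. intros H. unfold log_cos_kernel. auto_derive; [lra | field; lra]. Qed.

Lemma locally_lt_1 t0 (P : R -> Prop) :
  Rabs t0 < 1 -> (forall u, Rabs u < 1 -> P u) -> locally t0 P.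
Proof.
  intros Ht HP. assert (Hr : 0 < (1 - Rabs t0) / 2) by lra.
  assert (K : forall u, Rabs (u - t0) < (1 - Rabs t0) / 2 -> Rabs u < 1).
  { intros u Hu. pose proof (Rabs_triang (u - t0) t0).
    replace (u - t0 + t0) with u in H by ring. lra. }
  exists (mkposreal _ Hr). intros u Hu. apply HP, K, Hu.
Qed.

Lemma log_cos_int_derive a b t0 : Rabs t0 < 1 ->
  is_derive (log_cos_int a b) t0 (RInt (log_cos_kernel t0) a b).
Proof.
  intros Ht.
  replace (RInt (log_cos_kernel t0) a b)
    with (RInt (fun p => Derive (fun u => ln (1 + u^2 + 2*u*cos p)) t0) a b).
  2:{ apply RInt_ext. intros p _. apply is_derive_unique, ln_one_add_sqr_cos_derive.
      now apply one_add_sqr_cos_pos. }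
  apply (is_derive_RInt_param (fun t p => ln (1 + t^2 + 2*t*cos p)) a b t0).
  - apply locally_lt_1; auto. intros u Hu p _. eexists.
    apply ln_one_add_sqr_cos_derive, one_add_sqr_cos_pos, Hu.
  - intros p _.
    apply continuity_2d_pt_ext_loc
      with (f := fun u v => (2*u + 2*cos v) * / (1 + u*u + 2*u*cos v)).
    + destruct (locally_lt_1 t0 (fun u => Rabs u < 1) Ht (fun u H => H)) as [d Hd].
      exists d. intros u v Hu _. symmetry. apply is_derive_unique.
      replace (1 + u*u + 2*u*cos v) with (1 + u^2 + 2*u*cos v) by ring.
      apply ln_one_add_sqr_cos_derive, one_add_sqr_cos_pos, Hd, Hu.
    + apply continuity_2d_pt_mult; [continuity_2d|].
      apply continuity_2d_pt_inv; [continuity_2d|].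
      replace (1 + t0*t0 + 2*t0*cos p) with (1 + t0^2 + 2*t0*cos p) by ring.
      apply Rgt_not_eq, one_add_sqr_cos_pos, Ht.
  - apply locally_lt_1; auto. intros u Hu. apply ex_RInt_derive. intros p.
    auto_derive. now apply one_add_sqr_cos_pos.
Qed.

Lemma log_cos_int_continuity a b t : Rabs t < 1 -> continuity_pt (log_cos_int a b) t.
Proof.
  intros H. apply continuity_pt_filterlim, (ex_derive_continuous (log_cos_int a b)).
  eexists. now apply log_cos_int_derive.
Qed.

Lemma log_cos_int_0 a b : log_cos_int a b 0 = 0.
Proof.
  unfold log_cos_int. rewrite (RInt_ext _ (fun _ => 0)), RInt_constR; [ring|].
  intros x _. replace (1 + 0^2 + 2*0*cos x) with 1 by ring. apply ln_1.
Qed.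

(* [arg_prim t p = 2 arg (1 + t e^{ip})] when [1 + t cos p > 0]; the
   Cauchy-Riemann equations for [log (1 + t e^{ip})^2] give
   [t * log_cos_kernel t p = d/dp arg_prim t p]. *)
Definition arg_prim t p : R := 2 * atan (t * sin p / (1 + t * cos p)).

Lemma arg_prim_derive t p : 0 < 1 + t * cos p ->
  is_derive (arg_prim t) p (t * log_cos_kernel t p).
Proof.
  intros H. unfold arg_prim, log_cos_kernel. pose proof (cos_bound p).
  assert (S : sin p ^ 2 = 1 - cos p ^ 2)
    by (pose proof (sin2_cos2 p); unfold Rsqr in *; nra).
  assert (Q : 0 < 1 + t^2 + 2*t*cos p) by (now apply one_add_sqr_add_pos).
  assert (E : (1 + t * cos p) * (1 + t * cos p) + t * sin p * (t * sin p)
              = 1 + t^2 + 2*t*cos p).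
  { replace (t * sin p * (t * sin p)) with (t^2 * sin p ^ 2) by ring. rewrite S. ring. }
  auto_derive; [lra|]. field_simplify; [rewrite S; f_equal; ring | lra | rewrite E; lra].
Qed.

Lemma arg_prim_sin_0 t p : sin p = 0 -> arg_prim t p = 0.
Proof.
  intros H. unfold arg_prim. rewrite H.
  replace (t * 0 / (1 + t * cos p)) with 0 by (unfold Rdiv; ring). rewrite atan_0. ring.
Qed.

Lemma mul_RInt_log_cos_kernel t a b :
  (forall p, Rmin a b <= p <= Rmax a b -> 0 < 1 + t * cos p) ->
  t * RInt (log_cos_kernel t) a b = arg_prim t b - arg_prim t a.
Proof.
  intros Hp.
  assert (cont : forall p, Rmin a b <= p <= Rmax a b -> continuous (log_cos_kernel t) p).
  { intros p Hp'. apply (ex_derive_continuous (log_cos_kernel t)). unfold log_cos_kernel.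
    pose proof (Hp p Hp'). pose proof (cos_bound p).
    auto_derive. apply Rgt_not_eq, one_add_sqr_add_pos; auto. }
  rewrite <- RInt_scalR by (apply (@ex_RInt_continuous R_CompleteNormedModule); auto).
  apply is_RInt_unique, (is_RInt_derive (arg_prim t) (fun p => t * log_cos_kernel t p)).
  - intros p Hp'. now apply arg_prim_derive, Hp.
  - intros p Hp'. apply (continuous_scal_r t (log_cos_kernel t)), cont, Hp'.
Qed.

Lemma log_cos_int_period r : Rabs r < 1 -> log_cos_int 0 (2*PI) r = 0.
Proof.
  intros Hr. rewrite <- (log_cos_int_0 0 (2*PI)) at 2. symmetry.
  assert (Hin : forall x, Rmin 0 r <= x <= Rmax 0 r -> Rabs x < 1).
  { intros x Hx. apply Rabs_def2 in Hr.
    apply Rabs_def1; unfold Rmin, Rmax in Hx; destruct Rle_dec; lra. }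
  apply eq_of_is_derive_0_open.
  - intros x Hx.
    assert (Hx0 : x <> 0) by (unfold Rmin, Rmax in Hx; destruct Rle_dec; lra).
    assert (Hx1 : Rabs x < 1) by (apply Hin; lra).
    assert (E : RInt (log_cos_kernel x) 0 (2*PI) = 0).
    { apply (Rmult_eq_reg_l x); [|exact Hx0].
      rewrite mul_RInt_log_cos_kernel, !arg_prim_sin_0; [ring | apply sin_0 | apply sin_2PI |].
      intros p _. apply one_add_mul_pos, cos_bound. exact Hx1. }
    pose proof (log_cos_int_derive 0 (2*PI) x Hx1) as D. rewrite E in D. exact D.
  - intros x Hx. apply log_cos_int_continuity, Hin, Hx.
Qed.

(* Write [A + B cos t = M |1 + r e^{it}|^2] with [M = (A + sqrt (A^2 - B^2)) / 2]
   and [r = B / (2 M)]. *)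
Lemma RInt_ln_add_mul_cos A B : 0 <= B < A ->
  RInt (fun t => ln (A + B * cos t)) 0 (2*PI) = 2*PI * ln ((A + sqrt (A^2 - B^2)) / 2).
Proof.
  intros [HB HA].
  set (s := sqrt (A^2 - B^2)).
  assert (Hs0 : 0 <= s) by apply sqrt_pos.
  assert (Hs2 : s * s = A^2 - B^2) by (apply sqrt_sqrt; nra).
  set (M := (A + s) / 2).
  assert (HM : 0 < M) by (unfold M; lra).
  set (r := B / (2*M)).
  assert (Hr : Rabs r < 1).
  { unfold r. rewrite Rabs_pos_eq by (apply Rdiv_le_0_compat; lra).
    apply Rmult_lt_reg_r with (2*M); [lra|].
    unfold Rdiv. rewrite Rmult_assoc, Rinv_l by lra. unfold M. lra. }
  assert (Eq : forall t, A + B * cos t = M * (1 + r^2 + 2*r*cos t)).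
  { intros t. unfold r. field_simplify; [|lra].
    assert (4*M^2 + B^2 = 4*A*M) by (unfold M; nra).
    apply Rmult_eq_reg_r with (4*M); [|lra]. field_simplify; [nra|lra]. }
  rewrite (RInt_ext _ (fun t => ln M + ln (1 + r^2 + 2*r*cos t))).
  - rewrite RInt_plusR, RInt_constR.
    + fold (log_cos_int 0 (2*PI) r). rewrite log_cos_int_period by exact Hr. to_R. ring.
    + apply ex_RInt_continuity. intros. apply continuity_pt_const. now intros ? ?.
    + apply ex_RInt_derive. intros x. auto_derive. now apply one_add_sqr_cos_pos.
  - intros x _. rewrite Eq. apply ln_mult; [exact HM | now apply one_add_sqr_cos_pos].
Qed.

(** * The inverse tangent integral *)

(* [Ti2 t = int_0^t atan x / x dx], reparametrised by [x = t s];
   [atan_quot t 0 = t] is the continuous extension at [s = 0]. *)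
Definition atan_quot t s : R :=
  match Req_EM_T s 0 with left _ => t | right _ => atan (t * s) / s end.
Definition Ti2 t : R := RInt (atan_quot t) 0 1.

Definition atan_quot_derive t s : R := 1 / (1 + t^2 * s^2).

Lemma atan_quot_derive_continuity x y : continuity_2d_pt atan_quot_derive x y.
Proof.
  apply continuity_2d_pt_ext with (f := fun u v => 1 * / (1 + u*u*(v*v))).
  - intros u v. unfold atan_quot_derive, Rdiv. do 2 f_equal. ring.
  - apply continuity_2d_pt_mult; [continuity_2d|]. apply continuity_2d_pt_inv; [continuity_2d|].
    apply Rgt_not_eq. nra.
Qed.

Lemma atan_quot_RInt t s : atan_quot t s = RInt (fun u => atan_quot_derive u s) 0 t.
Proof.
  symmetry. apply is_RInt_unique. unfold atan_quot, atan_quot_derive.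
  destruct (Req_EM_T s 0) as [->|H].
  - apply (is_RInt_ext (fun _ => 1)).
    + intros x _. to_R. replace (1 + x^2 * 0^2) with 1 by ring. field.
    + replace t with (scal (t - 0) 1) at 2 by (to_R; unfold scal; simpl; unfold mult; simpl; ring).
      apply (@is_RInt_const R_NormedModule).
  - replace (atan (t * s) / s) with (atan (t * s) / s - atan (0 * s) / s)
      by (rewrite Rmult_0_l, atan_0; unfold Rdiv; ring).
    apply (is_RInt_derive (fun u => atan (u * s) / s)).
    + intros x _. auto_derive; [easy|]. field. split; [apply Rgt_not_eq; nra | exact H].
    + intros x _. apply (ex_derive_continuous (fun u => 1 / (1 + u^2 * s^2))).
      auto_derive. nra.
Qed.

Lemma atan_quot_is_derive t s : is_derive (fun u => atan_quot u s) t (atan_quot_derive t s).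
Proof.
  apply is_derive_ext with (f := fun u => RInt (fun v => atan_quot_derive v s) 0 u).
  { intros. now rewrite atan_quot_RInt. }
  apply (is_derive_RInt (fun v => atan_quot_derive v s) _ 0 t).
  - apply filter_forall. intros b. apply RInt_correctR, ex_RInt_continuity.
    intros. apply (continuity_2d_pt_fun1 atan_quot_derive), atan_quot_derive_continuity.
  - apply continuity_pt_filterlim, (continuity_2d_pt_fun1 atan_quot_derive).
    apply atan_quot_derive_continuity.
Qed.

Lemma atan_quot_continuity t s : continuity_pt (atan_quot t) s.
Proof.
  apply continuity_pt_ext with (f := fun s => RInt (fun u => atan_quot_derive u s) 0 t).
  { intros. now rewrite atan_quot_RInt. }
  apply (continuity_pt_RInt_param (fun s u => atan_quot_derive u s)).
  intros x y. apply (continuity_2d_pt_swap atan_quot_derive), atan_quot_derive_continuity.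
Qed.

Lemma Ti2_derive t : is_derive Ti2 t (RInt (atan_quot_derive t) 0 1).
Proof.
  replace (RInt (atan_quot_derive t) 0 1)
    with (RInt (fun s => Derive (fun u => atan_quot u s) t) 0 1).
  2:{ apply RInt_ext. intros s _. apply is_derive_unique, atan_quot_is_derive. }
  apply (is_derive_RInt_param atan_quot 0 1 t).
  - apply filter_forall. intros x s _. eexists. apply atan_quot_is_derive.
  - intros s _. apply continuity_2d_pt_ext with (f := atan_quot_derive).
    + intros u v. symmetry. apply is_derive_unique, atan_quot_is_derive.
    + apply atan_quot_derive_continuity.
  - apply filter_forall. intros y. apply ex_RInt_continuity, atan_quot_continuity.
Qed.

Lemma Ti2_continuity t : continuity_pt Ti2 t.
Proof.
  apply continuity_pt_filterlim, (ex_derive_continuous Ti2). eexists. apply Ti2_derive.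
Qed.

Lemma mul_RInt_atan_quot_derive t : t * RInt (atan_quot_derive t) 0 1 = atan t.
Proof.
  unfold atan_quot_derive.
  rewrite <- RInt_scalR by (apply ex_RInt_derive; intros; auto_derive; nra).
  rewrite (RInt_primitive (fun s => atan (t * s))), Rmult_1_r, Rmult_0_r, atan_0.
  - to_R. ring.
  - intros s. auto_derive; [auto | field; nra].
  - intros s. auto_derive. nra.
Qed.

Lemma Ti2_0 : Ti2 0 = 0.
Proof.
  unfold Ti2. rewrite (RInt_ext _ (fun _ => 0)), RInt_constR; [ring|].
  intros x _. unfold atan_quot. destruct (Req_EM_T x 0); [reflexivity|].
  rewrite Rmult_0_l, atan_0. to_R. unfold Rdiv. ring.
Qed.

(* Both sides vanish at [t = 0], and [t] times either derivative is [2 atan t]. *)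
Lemma log_cos_int_quarter t : 0 <= t < 1 -> log_cos_int 0 (PI/2) t = 2 * Ti2 t.
Proof.
  intros Ht.
  enough (E : log_cos_int 0 (PI/2) 0 - 2 * Ti2 0 = log_cos_int 0 (PI/2) t - 2 * Ti2 t)
    by (rewrite log_cos_int_0, Ti2_0 in E; lra).
  apply (eq_of_is_derive_0_open (fun u => log_cos_int 0 (PI/2) u - 2 * Ti2 u));
    rewrite Rmin_left, Rmax_right by lra.
  - intros x Hx. assert (Hx1 : Rabs x < 1) by (apply Rabs_def1; lra).
    assert (E : RInt (log_cos_kernel x) 0 (PI/2) - 2 * RInt (atan_quot_derive x) 0 1 = 0).
    { apply (Rmult_eq_reg_l x); [|lra].
      rewrite Rmult_minus_distr_l, mul_RInt_log_cos_kernel, Rmult_0_r.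
      - replace (x * (2 * RInt (atan_quot_derive x) 0 1))
          with (2 * (x * RInt (atan_quot_derive x) 0 1)) by ring.
        rewrite mul_RInt_atan_quot_derive. unfold arg_prim.
        rewrite sin_PI2, cos_PI2, sin_0, cos_0.
        replace (x * 1 / (1 + x * 0)) with x by field.
        replace (x * 0 / (1 + x * 1)) with 0 by (unfold Rdiv; ring).
        rewrite atan_0. ring.
      - intros p _. apply one_add_mul_pos, cos_bound. exact Hx1. }
    pose proof (is_derive_minusR _ _ x _ _ (log_cos_int_derive 0 (PI/2) x Hx1)
                  (is_derive_scalR Ti2 x 2 _ (Ti2_derive x))) as D.
    rewrite E in D. exact D.
  - intros x Hx. apply continuity_pt_minus.
    + apply log_cos_int_continuity, Rabs_def1; lra.
    + apply continuity_pt_scal, Ti2_continuity.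
Qed.

Lemma Ti2_inv_derive x : 0 < x -> is_derive (fun x => Ti2 x - Ti2 (/x) - PI/2 * ln x) x 0.
Proof.
  intros Hx.
  assert (D : is_derive (fun x => Ti2 (/x)) x (RInt (atan_quot_derive (/x)) 0 1 * (- / x^2))).
  { rewrite Rmult_comm. apply (is_derive_comp Ti2 (fun x => /x)); [apply Ti2_derive|].
    auto_derive; [lra | field; lra]. }
  assert (Dln : is_derive (fun x => PI/2 * ln x) x (PI/2 * / x))
    by (auto_derive; [lra | field; lra]).
  pose proof (is_derive_minusR _ _ x _ _ (is_derive_minusR _ _ x _ _ (Ti2_derive x) D) Dln)
    as Dsum.
  replace (RInt (atan_quot_derive x) 0 1 - RInt (atan_quot_derive (/x)) 0 1 * - / x ^ 2
           - PI / 2 * / x) with 0 in Dsum; [exact Dsum|].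
  pose proof (mul_RInt_atan_quot_derive x) as K1.
  pose proof (mul_RInt_atan_quot_derive (/x)) as K2. rewrite atan_inv in K2 by exact Hx.
  apply (Rmult_eq_reg_l x); [|lra].
  replace (x * (RInt (atan_quot_derive x) 0 1 - RInt (atan_quot_derive (/x)) 0 1 * - / x^2
               - PI / 2 * / x))
    with (x * RInt (atan_quot_derive x) 0 1 + / x * RInt (atan_quot_derive (/x)) 0 1 - PI/2)
    by (field; lra).
  rewrite K1, K2. ring.
Qed.

Lemma Ti2_inv k : 0 < k -> Ti2 k = Ti2 (/k) + PI/2 * ln k.
Proof.
  intros Hk.
  enough (E : Ti2 1 - Ti2 (/1) - PI/2 * ln 1 = Ti2 k - Ti2 (/k) - PI/2 * ln k)
    by (rewrite Rinv_1, ln_1 in E; lra).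
  assert (Hpos : forall x, Rmin 1 k <= x <= Rmax 1 k -> 0 < x)
    by (intros x Hx; unfold Rmin, Rmax in Hx; destruct Rle_dec; lra).
  apply (eq_of_is_derive_0_open (fun x => Ti2 x - Ti2 (/x) - PI/2 * ln x)).
  - intros x Hx. apply Ti2_inv_derive, Hpos. lra.
  - intros x Hx. apply continuity_pt_filterlim.
    apply (ex_derive_continuous (fun x => Ti2 x - Ti2 (/x) - PI/2 * ln x)).
    eexists. apply Ti2_inv_derive, Hpos, Hx.
Qed.

Lemma atan_le_id x : 0 <= x -> atan x <= x.
Proof.
  intros Hx.
  enough (0 - atan 0 <= x - atan x) by (rewrite atan_0 in *; lra).
  apply (le_of_is_derive_nonneg (fun x => x - atan x) (fun x => 1 - / (1 + x^2)) 0 x Hx).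
  - intros t _. auto_derive; [easy | field; nra].
  - intros t _. assert (/ (1 + t^2) <= 1) by (rewrite <- Rinv_1; apply Rinv_le_contravar; nra).
    lra.
Qed.

Lemma atan_ge_cubic x : 0 <= x -> x - x^3/3 <= atan x.
Proof.
  intros Hx.
  enough (atan 0 - 0 + 0^3/3 <= atan x - x + x^3/3) by (rewrite atan_0 in *; lra).
  apply (le_of_is_derive_nonneg (fun x => atan x - x + x^3/3) (fun x => x^4 / (1 + x^2)) 0 x Hx).
  - intros t _. auto_derive; [easy | field; nra].
  - intros t _. apply Rdiv_le_0_compat; nra.
Qed.

Lemma PI_gt_314 : 3.14 < PI.
Proof.
  pose proof Machin_4_5_239.
  assert (/5 - (/5)^3/3 <= atan (/5)) by (apply atan_ge_cubic; lra).
  assert (atan (/239) <= /239) by (apply atan_le_id; lra).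
  lra.
Qed.

Lemma ln_ratio_ge z : 0 <= z < 1 -> 2*z + 2*z^3/3 + 2*z^5/5 <= ln ((1 + z) / (1 - z)).
Proof.
  intros Hz. rewrite ln_div by lra.
  enough (ln (1 + 0) - ln (1 - 0) - (2*0 + 2*0^3/3 + 2*0^5/5)
          <= ln (1 + z) - ln (1 - z) - (2*z + 2*z^3/3 + 2*z^5/5))
    by (rewrite Rplus_0_r, Rminus_0_r, ln_1 in *; lra).
  apply (le_of_is_derive_nonneg (fun z => ln (1 + z) - ln (1 - z) - (2*z + 2*z^3/3 + 2*z^5/5))
           (fun z => 2 * z^6 / (1 - z^2)) 0 z (proj1 Hz)).
  - intros t Ht. auto_derive; [lra | field; split; nra].
  - intros t Ht. apply Rdiv_le_0_compat; nra.
Qed.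

Lemma sqrt3_bounds : 1.732 < sqrt 3 < 1.7321.
Proof.
  split; [rewrite <- (sqrt_pow2 1.732) | rewrite <- (sqrt_pow2 1.7321)];
    try apply sqrt_lt_1_alt; lra.
Qed.

Lemma sqrt3_sqr : sqrt 3 * sqrt 3 = 3.
Proof. apply sqrt_sqrt. lra. Qed.

Lemma ln_le x y : 0 < x -> x <= y -> ln x <= ln y.
Proof.
  intros Hx Hxy. destruct (Req_dec x y) as [->|]; [lra|]. left. apply ln_increasing; lra.
Qed.

Lemma ln_le_sub_1 x : 0 < x -> ln x <= x - 1.
Proof.
  intros Hx. rewrite <- (ln_exp (x - 1)). apply ln_le; [exact Hx|].
  pose proof (exp_ineq1_le (x - 1)). lra.
Qed.

Lemma continuity_pt_ln_comp (f : R -> R) x :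
  continuity_pt f x -> 0 < f x -> continuity_pt (fun x => ln (f x)) x.
Proof.
  intros Hf Hpos. apply (continuity_pt_comp f ln); [exact Hf|].
  apply derivable_continuous_pt. exists (/ f x). now apply derivable_pt_lim_ln.
Qed.

Lemma continuity_pt_Rmax_l e x : continuity_pt (Rmax e) x.
Proof.
  apply continuity_pt_ext with (f := fun x => (e + x + Rabs (x - e)) / 2).
  { intros y. unfold Rmax. destruct Rle_dec.
    - rewrite Rabs_pos_eq by lra. field.
    - rewrite Rabs_left by lra. field. }
  apply continuity_pt_div; [| apply continuity_pt_const; now intros ? ? | lra].
  apply continuity_pt_plus; [apply continuity_pt_plus|].
  - apply continuity_pt_const. now intros ? ?.
  - apply continuity_pt_id.
  - apply (continuity_pt_comp (fun x => x - e) Rabs); [|apply Rcontinuity_abs].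
    apply continuity_pt_minus; [apply continuity_pt_id | apply continuity_pt_const; now intros ? ?].
Qed.

(** * The Mahler measure of [pC0] *)

Definition modulus_pC0 th ph : R := 32 + 8 * cos ph ^ 2 + (32 - 8 * cos ph ^ 2) * cos th.

(* [pC0 = q * q], and [X + i Y = q (e^{i th}, e^{i ph})] has [X^2 + Y^2 = modulus_pC0 th ph]. *)
Lemma Cnorm_pC0_cexp th ph : Cnorm (pC0 (cexp th) (cexp ph)) = modulus_pC0 th ph.
Proof.
  unfold Cnorm, pC0, cexp, modulus_pC0, Cmul, Cadd, Csub, Copp, Cscal, Cof. simpl.
  set (c := cos ph). set (s := sin ph). set (u := cos th). set (v := sin th).
  assert (Hcs : c^2 + s^2 = 1) by (unfold c, s; rewrite <- (sin2_cos2 ph); unfold Rsqr; ring).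
  assert (Huv : u^2 + v^2 = 1) by (unfold u, v; rewrite <- (sin2_cos2 th); unfold Rsqr; ring).
  set (X := - (u * (c * c - s * s + - (4 * c) + 1) - v * (c * s + s * c + - (4 * s) + 0)) +
     (c * c - s * s + 4 * c + 1)).
  set (Y := - (u * (c * s + s * c + - (4 * s) + 0) + v * (c * c - s * s + - (4 * c) + 1)) +
     (c * s + s * c + 4 * s + 0)).
  clearbody c s u v.
  assert (EX : X = c * ((2*c + 4) + (4 - 2*c) * u) - s * (4 - 2*c) * v).
  { assert (X - (c * ((2*c + 4) + (4 - 2*c) * u) - s * (4 - 2*c) * v)
            = (c^2 + s^2 - 1) * (u - 1)) as K by (unfold X; ring).
    rewrite Hcs in K. lra. }
  assert (EY : Y = s * ((2*c + 4) + (4 - 2*c) * u) + c * (4 - 2*c) * v).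
  { assert (Y - (s * ((2*c + 4) + (4 - 2*c) * u) + c * (4 - 2*c) * v)
            = v * (c^2 + s^2 - 1)) as K by (unfold Y; ring).
    rewrite Hcs in K. lra. }
  assert (E2 : X^2 + Y^2 = 32 + 8*c^2 + (32 - 8*c^2) * u).
  { rewrite EX, EY.
    assert ((c * ((2*c + 4) + (4 - 2*c) * u) - s * (4 - 2*c) * v)^2
            + (s * ((2*c + 4) + (4 - 2*c) * u) + c * (4 - 2*c) * v)^2
            - (32 + 8*c^2 + (32 - 8*c^2) * u)
            = (c^2 + s^2 - 1) * (((2*c + 4) + (4 - 2*c) * u)^2 + ((4 - 2*c) * v)^2)
              + (4 - 2*c)^2 * (u^2 + v^2 - 1)) as K by ring.
    rewrite Hcs, Huv in K. lra. }
  replace ((X * X - Y * Y) * ((X * X - Y * Y) * 1) + (X * Y + Y * X) * ((X * Y + Y * X) * 1))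
    with ((X^2 + Y^2)^2) by ring.
  rewrite sqrt_pow2 by nra. rewrite E2. ring.
Qed.

Lemma modulus_pC0_nonneg th ph : 0 <= modulus_pC0 th ph.
Proof. unfold modulus_pC0. pose proof (cos_bound th). pose proof (cos_bound ph). nra. Qed.

Lemma modulus_pC0_continuity x y : continuity_2d_pt modulus_pC0 x y.
Proof.
  apply continuity_2d_pt_ext
    with (f := fun u v => 32 + 8 * (cos v * cos v) + (32 - 8 * (cos v * cos v)) * cos u).
  - intros. unfold modulus_pC0. ring.
  - continuity_2d.
Qed.

Lemma pow5_le_Rmax_mul_pow4 F eps : 0 <= F -> 0 < eps ->
  (F + eps)^5 <= Rmax eps F * (F + 2*eps)^4.
Proof.
  intros HF He. unfold Rmax. destruct Rle_dec as [Hle|Hlt].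
  - set (d := F - eps). replace F with (eps + d) by (unfold d; ring).
    assert (0 <= d) by (unfold d; lra).
    assert ((eps + d) * (eps + d + 2*eps)^4 - (eps + d + eps)^5
            = 49*eps^5 + 109*eps^4*d + 82*eps^3*d^2 + 26*eps^2*d^3 + 3*eps*d^4) by ring.
    assert (0 <= 49*eps^5 + 109*eps^4*d + 82*eps^3*d^2 + 26*eps^2*d^3 + 3*eps*d^4)
      by (repeat apply Rplus_le_le_0_compat; repeat apply Rmult_le_pos;
          try apply pow_le; lra).
    lra.
  - assert (eps * (F + 2*eps)^4 - (F + eps)^5
            = 15*eps^5 + 27*eps^4*F + 14*eps^3*F^2 - 2*eps^2*F^3 - 4*eps*F^4 - F^5) by ring.
    assert (eps^2 * F^3 <= eps^3 * F^2).
    { replace (eps^2 * F^3) with ((eps^2 * F^2) * F) by ring.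
      replace (eps^3 * F^2) with ((eps^2 * F^2) * eps) by ring.
      apply Rmult_le_compat_l; [apply Rmult_le_pos; apply pow_le|]; lra. }
    assert (eps * F^4 <= eps^3 * F^2).
    { replace (eps * F^4) with ((eps * F^2) * (F * F)) by ring.
      replace (eps^3 * F^2) with ((eps * F^2) * (eps * eps)) by ring.
      apply Rmult_le_compat_l; [apply Rmult_le_pos; [lra | apply pow_le; lra] | nra]. }
    assert (F^5 <= eps^3 * F^2).
    { replace (F^5) with (F^2 * (F * F * F)) by ring.
      replace (eps^3 * F^2) with (F^2 * (eps * eps * eps)) by ring.
      apply Rmult_le_compat_l; [apply pow_le; lra|].
      assert (F * F <= eps * eps) by nra. nra. }
    assert (0 <= eps^5) by (apply pow_le; lra).
    assert (0 <= eps^4 * F) by (apply Rmult_le_pos; [apply pow_le|]; lra).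
    assert (0 <= eps^3 * F^2) by (apply Rmult_le_pos; apply pow_le; lra).
    lra.
Qed.

(* Jensen's formula computes the [th]-integrals of the two shifted logarithms
   bracketing the truncated [ln (Rmax eps F)]. *)
Lemma ln_Rmax_bounds F eps : 0 <= F -> 0 < eps ->
  5 * ln (F + eps) - 4 * ln (F + 2*eps) <= ln (Rmax eps F) <= ln (F + eps).
Proof.
  intros HF He. assert (Hm : 0 < Rmax eps F) by (eapply Rlt_le_trans; [|apply Rmax_l]; lra).
  split.
  - replace (5 * ln (F + eps)) with (ln ((F + eps)^5)) by (rewrite ln_pow by lra; simpl; ring).
    replace (4 * ln (F + 2*eps)) with (ln ((F + 2*eps)^4)) by (rewrite ln_pow by lra; simpl; ring).
    replace (ln ((F + eps)^5) - ln ((F + 2*eps)^4))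
      with (ln ((F + eps)^5 / (F + 2*eps)^4)) by (apply ln_div; apply pow_lt; lra).
    apply ln_le; [apply Rdiv_lt_0_compat; apply pow_lt; lra|].
    assert (0 < (F + 2*eps)^4) by (apply pow_lt; lra).
    apply (Rmult_le_reg_r ((F + 2*eps)^4)); [lra|].
    unfold Rdiv. rewrite Rmult_assoc, Rinv_l by lra.
    rewrite Rmult_1_r. now apply pow5_le_Rmax_mul_pow4.
  - apply ln_le; [exact Hm|]. unfold Rmax. destruct Rle_dec; lra.
Qed.

(* [exp ((1/2pi) int_0^2pi ln (modulus_pC0 th ph + eta) dth)], with [c = cos ph],
   and its limit as [eta -> 0]. *)
Definition geom_mean_shifted eta c : R :=
  ((32 + 8*c^2 + eta) + sqrt ((32 + 8*c^2 + eta)^2 - (32 - 8*c^2)^2)) / 2.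
Definition geom_mean c : R := (4 + 2 * Rabs c)^2.

Lemma RInt_ln_modulus_pC0_shifted eta ph : 0 < eta ->
  RInt (fun th => ln (modulus_pC0 th ph + eta)) 0 (2*PI)
  = 2*PI * ln (geom_mean_shifted eta (cos ph)).
Proof.
  intros He. unfold geom_mean_shifted. rewrite <- RInt_ln_add_mul_cos.
  - apply RInt_ext. intros x _. unfold modulus_pC0. f_equal. ring.
  - pose proof (cos_bound ph). split; nra.
Qed.

Lemma geom_mean_shifted_bounds eta c : 0 < eta <= 1 -> -1 <= c <= 1 ->
  geom_mean c <= geom_mean_shifted eta c <= geom_mean c + 5 * sqrt eta.
Proof.
  intros He Hc.
  set (S := sqrt ((32 + 8*c^2 + eta)^2 - (32 - 8*c^2)^2)).
  assert (Hrc : Rabs c ^ 2 = c^2) by (rewrite RPow_abs, Rabs_pos_eq; [ring | nra]).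
  assert (Ha : 0 <= Rabs c <= 1) by (split; [apply Rabs_pos | apply Rabs_le; lra]).
  assert (HM : geom_mean c = (32 + 8*c^2 + 32 * Rabs c) / 2)
    by (unfold geom_mean; rewrite <- Hrc; field).
  assert (Hw := sqrt_pos eta). assert (Hw2 : sqrt eta * sqrt eta = eta) by (apply sqrt_sqrt; lra).
  assert (eta <= sqrt eta).
  { assert (sqrt eta <= 1) by (rewrite <- sqrt_1; apply sqrt_le_1_alt; lra). nra. }
  assert (32 * Rabs c <= S).
  { unfold S. rewrite <- (sqrt_pow2 (32 * Rabs c)) by lra. apply sqrt_le_1_alt.
    replace ((32 * Rabs c)^2) with (1024 * Rabs c ^ 2) by ring. rewrite Hrc. nra. }
  assert (S <= 32 * Rabs c + 9 * sqrt eta).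
  { unfold S. rewrite <- (sqrt_pow2 (32 * Rabs c + 9 * sqrt eta)) by lra. apply sqrt_le_1_alt.
    replace ((32 * Rabs c + 9 * sqrt eta)^2)
      with (1024 * Rabs c ^ 2 + 576 * Rabs c * sqrt eta + 81 * (sqrt eta * sqrt eta)) by ring.
    rewrite Hrc, Hw2. assert (0 <= Rabs c * sqrt eta) by (apply Rmult_le_pos; lra). nra. }
  unfold geom_mean_shifted. fold S. rewrite HM. lra.
Qed.

Lemma ln_geom_mean_shifted_bounds eta c : 0 < eta <= 1 -> -1 <= c <= 1 ->
  0 <= ln (geom_mean_shifted eta c) - ln (geom_mean c) <= 5/16 * sqrt eta.
Proof.
  intros He Hc. destruct (geom_mean_shifted_bounds eta c He Hc) as [H1 H2].
  assert (16 <= geom_mean c) by (unfold geom_mean; pose proof (Rabs_pos c); nra).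
  split.
  - assert (ln (geom_mean c) <= ln (geom_mean_shifted eta c)) by (apply ln_le; lra). lra.
  - rewrite <- ln_div by lra.
    eapply Rle_trans; [apply ln_le_sub_1, Rdiv_lt_0_compat; lra|].
    apply (Rmult_le_reg_r (geom_mean c)); [lra|]. unfold Rdiv.
    replace ((geom_mean_shifted eta c * / geom_mean c - 1) * geom_mean c)
      with (geom_mean_shifted eta c - geom_mean c) by (field; lra).
    pose proof (sqrt_pos eta). nra.
Qed.

Definition ln_trunc_modulus eps th ph : R := ln (Rmax eps (modulus_pC0 th ph)).

Lemma ln_trunc_modulus_continuity eps x y : 0 < eps ->
  continuity_2d_pt (ln_trunc_modulus eps) x y.
Proof.
  intros He. apply (continuity_1d_2d_pt_comp (fun z => ln (Rmax eps z)) modulus_pC0).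
  - apply continuity_pt_ln_comp; [apply continuity_pt_Rmax_l|].
    eapply Rlt_le_trans; [|apply Rmax_l]. exact He.
  - apply modulus_pC0_continuity.
Qed.

Lemma ex_RInt_ln_modulus_pC0_shifted eta ph a b : 0 < eta ->
  ex_RInt (fun th => ln (modulus_pC0 th ph + eta)) a b.
Proof.
  intros He. apply ex_RInt_continuity. intros x. apply continuity_pt_ln_comp.
  - apply continuity_pt_plus; [| apply continuity_pt_const; now intros ? ?].
    apply (continuity_2d_pt_fun1 modulus_pC0), modulus_pC0_continuity.
  - pose proof (modulus_pC0_nonneg x ph). lra.
Qed.

Lemma RInt_ln_trunc_modulus_approx eps ph : 0 < eps <= 1/2 ->
  Rabs (RInt (fun th => ln_trunc_modulus eps th ph) 0 (2*PI) - 2*PI * ln (geom_mean (cos ph)))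
  <= 2*PI * (2 * sqrt eps).
Proof.
  intros He. pose proof PI_RGT_0. pose proof (cos_bound ph).
  assert (exf : ex_RInt (fun th => ln_trunc_modulus eps th ph) 0 (2*PI)).
  { apply ex_RInt_continuity. intros x.
    apply (continuity_2d_pt_fun1 (ln_trunc_modulus eps)), ln_trunc_modulus_continuity. lra. }
  assert (exs : forall eta, 0 < eta -> ex_RInt (fun th => ln (modulus_pC0 th ph + eta)) 0 (2*PI))
    by (intros; now apply ex_RInt_ln_modulus_pC0_shifted).
  assert (U : RInt (fun th => ln_trunc_modulus eps th ph) 0 (2*PI)
              <= 2*PI * ln (geom_mean_shifted eps (cos ph))).
  { rewrite <- RInt_ln_modulus_pC0_shifted by lra. apply RInt_le; auto; [lra | apply exs; lra|].
    intros x _. unfold ln_trunc_modulus.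
    destruct (ln_Rmax_bounds (modulus_pC0 x ph) eps); [apply modulus_pC0_nonneg | lra | lra]. }
  assert (L : 5 * (2*PI * ln (geom_mean_shifted eps (cos ph)))
              - 4 * (2*PI * ln (geom_mean_shifted (2*eps) (cos ph)))
              <= RInt (fun th => ln_trunc_modulus eps th ph) 0 (2*PI)).
  { rewrite <- !RInt_ln_modulus_pC0_shifted by lra.
    rewrite <- !RInt_scalR by (apply exs; lra).
    rewrite <- RInt_minusR by (apply ex_RInt_scalR, exs; lra).
    apply RInt_le; auto; [lra | apply ex_RInt_minusR; apply ex_RInt_scalR, exs; lra|].
    intros x _. unfold ln_trunc_modulus.
    destruct (ln_Rmax_bounds (modulus_pC0 x ph) eps); [apply modulus_pC0_nonneg | lra | lra]. }
  destruct (ln_geom_mean_shifted_bounds eps (cos ph)) as [B0 B1]; [lra | lra |].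
  destruct (ln_geom_mean_shifted_bounds (2*eps) (cos ph)) as [_ B2]; [lra | lra |].
  pose proof (sqrt_pos eps).
  set (m := ln (geom_mean (cos ph))) in *.
  assert (sqrt (2*eps) <= 8/5 * sqrt eps).
  { rewrite sqrt_mult by lra. apply Rmult_le_compat_r; [apply sqrt_pos|].
    rewrite <- (sqrt_pow2 (8/5)) by lra. apply sqrt_le_1_alt. lra. }
  assert (2*PI * ln (geom_mean_shifted eps (cos ph)) <= 2*PI * (m + 2 * sqrt eps))
    by (apply Rmult_le_compat_l; lra).
  assert (2*PI * ln (geom_mean_shifted (2*eps) (cos ph)) <= 2*PI * (m + 1/2 * sqrt eps))
    by (apply Rmult_le_compat_l; lra).
  assert (2*PI * m <= 2*PI * ln (geom_mean_shifted eps (cos ph)))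
    by (apply Rmult_le_compat_l; lra).
  apply Rabs_le. lra.
Qed.

Lemma continuity_pt_ln_geom_mean_cos x : continuity_pt (fun ph => ln (geom_mean (cos ph))) x.
Proof.
  unfold geom_mean.
  assert (c : continuity_pt (fun ph => 4 + 2 * Rabs (cos ph)) x).
  { apply continuity_pt_plus; [apply continuity_pt_const; now intros ? ?|].
    apply continuity_pt_scal, (continuity_pt_comp cos Rabs);
      [apply continuity_cos | apply Rcontinuity_abs]. }
  apply continuity_pt_ln_comp.
  - apply continuity_pt_ext with (f := fun ph => (4 + 2 * Rabs (cos ph)) * (4 + 2 * Rabs (cos ph)));
      [intros; ring | now apply continuity_pt_mult].
  - pose proof (Rabs_pos (cos x)). nra.
Qed.

Definition mahler_pC0 : R := / (2*PI) * RInt (fun ph => ln (geom_mean (cos ph))) 0 (2*PI).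

Lemma RInt_RInt_ln_trunc_modulus_approx eps : 0 < eps <= 1/2 ->
  Rabs (RInt (fun th => RInt (fun ph => ln_trunc_modulus eps th ph) 0 (2*PI)) 0 (2*PI)
        / (2*PI)^2 - mahler_pC0) <= 2 * sqrt eps.
Proof.
  intros He. pose proof PI_RGT_0.
  assert (Hf : forall x y, continuity_2d_pt (ln_trunc_modulus eps) x y)
    by (intros; apply ln_trunc_modulus_continuity; lra).
  rewrite (RInt_fubini (ln_trunc_modulus eps)) by exact Hf.
  set (X := RInt (fun ph => RInt (fun th => ln_trunc_modulus eps th ph) 0 (2*PI)) 0 (2*PI)).
  set (Y := RInt (fun ph => ln (geom_mean (cos ph))) 0 (2*PI)).
  assert (exX : ex_RInt (fun ph => RInt (fun th => ln_trunc_modulus eps th ph) 0 (2*PI)) 0 (2*PI)).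
  { apply ex_RInt_continuity. intros x.
    apply (continuity_pt_RInt_param (fun ph th => ln_trunc_modulus eps th ph)).
    intros. now apply (continuity_2d_pt_swap (ln_trunc_modulus eps)). }
  assert (exY : ex_RInt (fun ph => ln (geom_mean (cos ph))) 0 (2*PI))
    by (apply ex_RInt_continuity, continuity_pt_ln_geom_mean_cos).
  assert (B : Rabs (X - 2*PI * Y) <= (2*PI - 0) * (2*PI * (2 * sqrt eps))).
  { unfold X, Y. rewrite <- RInt_scalR, <- RInt_minusR by auto using ex_RInt_scalR.
    apply abs_RInt_le_const; [lra | auto using ex_RInt_minusR, ex_RInt_scalR |].
    intros. now apply RInt_ln_trunc_modulus_approx. }
  unfold mahler_pC0. fold Y.
  replace (X / (2*PI)^2 - / (2*PI) * Y) with ((X - 2*PI * Y) / (2*PI)^2) by (field; lra).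
  unfold Rdiv. rewrite Rabs_mult, (Rabs_pos_eq (/ _)) by (left; apply Rinv_0_lt_compat, pow_lt; lra).
  apply (Rmult_le_reg_r ((2*PI)^2)); [apply pow_lt; lra|].
  rewrite Rmult_assoc, Rinv_l by (apply pow_nonzero; lra).
  replace (2 * sqrt eps * (2*PI)^2) with ((2*PI - 0) * (2*PI * (2 * sqrt eps))) by ring. lra.
Qed.

Lemma is_mahler_measure_pC0 : is_mahler_measure pC0 mahler_pC0.
Proof.
  exists (fun eps => RInt (fun th => RInt (fun ph => ln_trunc_modulus eps th ph) 0 (2*PI)) 0 (2*PI)).
  split.
  - intros eps He. exists (fun th => RInt (fun ph => ln_trunc_modulus eps th ph) 0 (2*PI)).
    assert (Hf : forall x y, continuity_2d_pt (ln_trunc_modulus eps) x y)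
      by (intros; now apply ln_trunc_modulus_continuity).
    split.
    + intros th _. apply is_RInt_Riemann.
      apply is_RInt_ext with (f := fun ph => ln_trunc_modulus eps th ph).
      * intros x _. unfold ln_trunc_modulus. now rewrite Cnorm_pC0_cexp.
      * apply RInt_correctR, ex_RInt_param, Hf.
    + apply is_RInt_Riemann, RInt_correctR, ex_RInt_continuity. intros.
      now apply continuity_pt_RInt_param.
  - intros e He. set (d := Rmin (1/2) ((e/2)^2)).
    assert (Hd : 0 < d) by (apply Rmin_pos; [lra | apply pow_lt; lra]).
    exists d. split; [exact Hd|]. intros eps Heps.
    assert (eps <= 1/2) by (pose proof (Rmin_l (1/2) ((e/2)^2)); unfold d in *; lra).
    assert (sqrt eps < e/2).
    { rewrite <- (sqrt_pow2 (e/2)) by lra. apply sqrt_lt_1_alt.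
      pose proof (Rmin_r (1/2) ((e/2)^2)). unfold d in *. lra. }
    eapply Rle_lt_trans; [apply RInt_RInt_ln_trunc_modulus_approx | ]; lra.
Qed.

Lemma RInt_comp_abs_cos (g : R -> R) : (forall x, continuity_pt g x) ->
  RInt (fun ph => g (Rabs (cos ph))) 0 (2*PI) = 4 * RInt (fun ph => g (cos ph)) 0 (PI/2).
Proof.
  intros Hg. pose proof PI_RGT_0.
  set (f := fun ph => g (Rabs (cos ph))).
  assert (Hf : forall x, continuity_pt f x).
  { intros x. apply (continuity_pt_comp (fun ph => Rabs (cos ph)) g); [|apply Hg].
    apply (continuity_pt_comp cos Rabs); [apply continuity_cos | apply Rcontinuity_abs]. }
  assert (ex : forall a b, ex_RInt f a b) by (intros; now apply ex_RInt_continuity).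
  assert (E1 : RInt f 0 (2*PI) = RInt f 0 PI + RInt f PI (2*PI))
    by (symmetry; exact (RInt_Chasles f 0 PI (2*PI) (ex _ _) (ex _ _))).
  assert (E2 : RInt f PI (2*PI) = RInt f 0 PI).
  { pose proof (RInt_shift f 0 PI PI Hf) as K.
    replace (0 + PI) with PI in K by ring. replace (PI + PI) with (2*PI) in K by ring.
    rewrite K. apply RInt_ext. intros x _. unfold f. now rewrite neg_cos, Rabs_Ropp. }
  assert (E3 : RInt f 0 PI = RInt f 0 (PI/2) + RInt f (PI/2) PI)
    by (symmetry; exact (RInt_Chasles f 0 (PI/2) PI (ex _ _) (ex _ _))).
  assert (E4 : RInt f (PI/2) PI = RInt f 0 (PI/2)).
  { pose proof (RInt_reflect f 0 (PI/2) PI Hf) as K.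
    replace (PI - PI/2) with (PI/2) in K by field. replace (PI - 0) with PI in K by ring.
    rewrite K. apply RInt_ext. intros x _. unfold f.
    rewrite cos_minus, cos_PI, sin_PI.
    replace (-1 * cos x + 0 * sin x) with (- cos x) by ring. now rewrite Rabs_Ropp. }
  assert (E5 : RInt f 0 (PI/2) = RInt (fun ph => g (cos ph)) 0 (PI/2)).
  { apply RInt_ext. intros x Hx. rewrite Rmin_left, Rmax_right in Hx by lra. unfold f.
    rewrite Rabs_pos_eq; [reflexivity | apply cos_ge_0; lra]. }
  fold f. to_R. rewrite E1, E2, E3, E4, E5. ring.
Qed.

(* [y = 2 - sqrt 3] solves [1 + y^2 = 4 y], so [4 + 2 cos p = |1 + y e^{ip}|^2 / y]. *)
Lemma mahler_pC0_value : 2*PI * mahler_pC0 = 16 * Ti2 (2 - sqrt 3) + 4*PI * ln (2 + sqrt 3).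
Proof.
  pose proof PI_RGT_0. pose proof sqrt3_bounds. pose proof sqrt3_sqr.
  set (y := 2 - sqrt 3).
  assert (Hy : 0 < y < 1) by (unfold y; lra).
  assert (Hy1 : Rabs y < 1) by (apply Rabs_def1; lra).
  assert (Hinv : / y = 2 + sqrt 3).
  { apply (Rmult_eq_reg_l y); [|lra]. rewrite Rinv_r by lra. unfold y. nra. }
  assert (Hln : ln (2 + sqrt 3) = - ln y) by (rewrite <- Hinv; apply ln_Rinv; lra).
  set (g := fun x => 2 * ln (4 + 2 * Rabs x)).
  assert (Hg : forall x, continuity_pt g x).
  { intros x. apply continuity_pt_scal, continuity_pt_ln_comp.
    - apply continuity_pt_plus; [apply continuity_pt_const; now intros ? ?|].
      apply continuity_pt_scal, Rcontinuity_abs.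
    - pose proof (Rabs_pos x). lra. }
  assert (E1 : 2*PI * mahler_pC0 = RInt (fun ph => g (Rabs (cos ph))) 0 (2*PI)).
  { unfold mahler_pC0. rewrite <- Rmult_assoc, Rinv_r, Rmult_1_l by lra.
    apply RInt_ext. intros x _. unfold g, geom_mean. rewrite Rabs_Rabsolu.
    assert (0 < 4 + 2 * Rabs (cos x)) by (pose proof (Rabs_pos (cos x)); lra).
    replace ((4 + 2 * Rabs (cos x))^2) with ((4 + 2 * Rabs (cos x)) * (4 + 2 * Rabs (cos x)))
      by ring.
    rewrite ln_mult by lra. to_R. ring. }
  assert (E2 : RInt (fun ph => g (cos ph)) 0 (PI/2)
               = RInt (fun p => 2 * (ln (1 + y^2 + 2*y*cos p) - ln y)) 0 (PI/2)).
  { apply RInt_ext. intros x Hx. rewrite Rmin_left, Rmax_right in Hx by lra. unfold g.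
    rewrite Rabs_pos_eq by (apply cos_ge_0; lra).
    rewrite <- ln_div by (try apply one_add_sqr_cos_pos; lra).
    do 2 f_equal. apply (Rmult_eq_reg_r y); [|lra].
    unfold Rdiv. rewrite Rmult_assoc, Rinv_l, Rmult_1_r by lra. unfold y. nra. }
  assert (ex : ex_RInt (fun p => ln (1 + y^2 + 2*y*cos p)) 0 (PI/2)).
  { apply ex_RInt_derive. intros. auto_derive. now apply one_add_sqr_cos_pos. }
  rewrite E1, RInt_comp_abs_cos, E2, RInt_scalR, RInt_minusR, RInt_constR by
    (auto using ex_RInt_minusR, ex_RInt_const).
  fold (log_cos_int 0 (PI/2) y). rewrite log_cos_int_quarter, Hln by lra. to_R. field.
Qed.

(** * The two Bloch-Wigner values *)

Lemma Arg_pos_fst a : 0 < fst a -> Arg a = atan (snd a / fst a).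
Proof. intros H. unfold Arg. destruct (Rlt_dec 0 (fst a)); [reflexivity | contradiction]. Qed.

Lemma atan_2_add_sqrt3 : atan (2 + sqrt 3) = 5*PI/12.
Proof.
  pose proof PI_RGT_0. pose proof sqrt3_bounds. pose proof sqrt3_sqr.
  rewrite <- (atan_tan (5*PI/12)) by lra. f_equal.
  replace (5*PI/12) with (PI/4 + PI/6) by field.
  unfold tan. rewrite sin_plus, cos_plus, sin_PI4, cos_PI4, sin_PI6, cos_PI6.
  assert (0 < sqrt 2) by (apply sqrt_lt_R0; lra).
  field_simplify; try lra.
  apply (Rmult_eq_reg_r (sqrt 3 - 1)); [|lra].
  unfold Rdiv. rewrite Rmult_assoc, Rinv_l by lra. nra.
Qed.

(* On the imaginary axis [Arg (1 - i s k) = - atan (s k)], so [Im Li2 (i k) = Ti2 k]. *)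
Lemma is_BlochWigner_i_2_add_sqrt3 :
  is_BlochWigner (0, 2 + sqrt 3) (Ti2 (2 + sqrt 3) - 5*PI/12 * ln (2 + sqrt 3)).
Proof.
  pose proof sqrt3_bounds.
  exists (Ti2 (2 + sqrt 3)). split.
  - apply is_RInt_Riemann, is_RInt_ext with (f := atan_quot (2 + sqrt 3)).
    + intros s Hs. rewrite Rmin_left, Rmax_right in Hs by lra.
      unfold atan_quot. destruct (Req_EM_T s 0) as [E|E]; [lra|].
      unfold Csub, Cadd, Copp, Cscal, Cof. rewrite Arg_pos_fst; simpl; [|lra].
      replace ((0 + - (s * (2 + sqrt 3))) / (1 + - (s * 0))) with (- ((2 + sqrt 3) * s))
        by field.
      rewrite atan_opp. field. exact E.
    + apply RInt_correctR, ex_RInt_continuity, atan_quot_continuity.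
  - unfold Csub, Cadd, Copp, Cscal, Cof, Cnorm. rewrite Arg_pos_fst; simpl; [|lra].
    replace ((0 + - (2 + sqrt 3)) / (1 + - 0)) with (- (2 + sqrt 3)) by field.
    rewrite atan_opp, atan_2_add_sqrt3.
    replace (0 * (0 * 1) + (2 + sqrt 3) * ((2 + sqrt 3) * 1)) with ((2 + sqrt 3)^2) by ring.
    rewrite sqrt_pow2 by lra. ring.
Qed.

(* [d/dt atan (t (sqrt 3/2) / (1 - t/2)) = vtet_kernel t]; hence
   [s * vtet_integrand s = - Arg (1 - s e^{i PI/3})], and [vtet_integrand] is
   continuous at [s = 0]. *)
Definition vtet_kernel t : R := (sqrt 3 / 2) / (1 - t + t^2).
Definition vtet_integrand s : R := RInt (fun u => vtet_kernel (s * u)) 0 1.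

Lemma vtet_kernel_denom_pos t : 0 < 1 - t + t^2.
Proof. nra. Qed.

Lemma vtet_kernel_continuity x y : continuity_2d_pt (fun s u => vtet_kernel (s * u)) x y.
Proof.
  apply continuity_2d_pt_ext with (f := fun s u => (sqrt 3 / 2) * / (1 - s*u + (s*u) * (s*u))).
  - intros. unfold vtet_kernel, Rdiv. do 2 f_equal. ring.
  - apply continuity_2d_pt_mult; [continuity_2d|]. apply continuity_2d_pt_inv; [continuity_2d|].
    pose proof (vtet_kernel_denom_pos (x*y)). apply Rgt_not_eq. nra.
Qed.

Lemma vtet_integrand_continuity s : continuity_pt vtet_integrand s.
Proof. apply continuity_pt_RInt_param, vtet_kernel_continuity. Qed.

Lemma mul_vtet_integrand s : 0 < s < 1 ->
  s * vtet_integrand s = atan (s * (sqrt 3 / 2) / (1 - s/2)).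
Proof.
  intros Hs. pose proof sqrt3_sqr.
  unfold vtet_integrand.
  rewrite <- RInt_scalR
    by (apply (ex_RInt_param (fun s u => vtet_kernel (s * u))), vtet_kernel_continuity).
  replace (atan (s * (sqrt 3 / 2) / (1 - s/2)))
    with (atan (s * 1 * (sqrt 3 / 2) / (1 - s * 1 / 2))
          - atan (s * 0 * (sqrt 3 / 2) / (1 - s * 0 / 2))).
  2:{ replace (s * 0 * (sqrt 3 / 2) / (1 - s * 0 / 2)) with 0 by field.
      rewrite atan_0, Rmult_1_r. ring. }
  apply is_RInt_unique, (is_RInt_derive (fun u => atan (s * u * (sqrt 3 / 2) / (1 - s * u / 2)))).
  - intros x Hx. rewrite Rmin_left, Rmax_right in Hx by lra.
    assert (s * x <= 1) by nra. assert (0 <= s * x) by nra.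
    pose proof (vtet_kernel_denom_pos (s * x)).
    assert (Q : (2 + - (s * x)) * (2 + - (s * x)) + s * x * sqrt 3 * (s * x * sqrt 3)
                = 4 * (1 - s*x + (s*x)^2)).
    { replace (s * x * sqrt 3 * (s * x * sqrt 3)) with ((s*x)^2 * (sqrt 3 * sqrt 3)) by ring.
      rewrite H. ring. }
    auto_derive; [lra|]. unfold vtet_kernel.
    field_simplify; [| lra | split; [lra | rewrite Q; lra]].
    replace (sqrt 3 ^ 2) with 3 by (simpl; rewrite Rmult_1_r; now symmetry).
    field. split; nra.
  - intros x _. apply (ex_derive_continuous (fun u => s * vtet_kernel (s * u))).
    unfold vtet_kernel. auto_derive. pose proof (vtet_kernel_denom_pos (s * x)). lra.
Qed.

Lemma is_BlochWigner_exp_i_PI3 :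
  is_BlochWigner (cos (PI/3), sin (PI/3)) (RInt vtet_integrand 0 1).
Proof.
  pose proof sqrt3_bounds. pose proof sqrt3_sqr.
  exists (RInt vtet_integrand 0 1). split.
  - apply is_RInt_Riemann, is_RInt_ext with (f := vtet_integrand).
    + intros s Hs. rewrite Rmin_left, Rmax_right in Hs by lra.
      rewrite cos_PI3, sin_PI3.
      unfold Csub, Cadd, Copp, Cscal, Cof. rewrite Arg_pos_fst; simpl; [|lra].
      replace ((0 + - (s * (sqrt 3 / 2))) / (1 + - (s * (1 / 2))))
        with (- (s * (sqrt 3 / 2) / (1 - s/2))) by (field; lra).
      rewrite atan_opp, <- mul_vtet_integrand by lra. to_R. field. lra.
    + apply RInt_correctR, ex_RInt_continuity, vtet_integrand_continuity.
  - unfold Cnorm. rewrite cos_PI3, sin_PI3. cbn [fst snd].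
    replace ((1/2)^2 + (sqrt 3 / 2)^2) with 1 by nra.
    rewrite sqrt_1, ln_1, Rmult_0_r, Rplus_0_r. reflexivity.
Qed.

Definition vtet_kernel_majorant t : R := 1 + t - 2/3*t^3 - 3*t^4 + 4*t^5 - 4/3*t^6.

Lemma vtet_kernel_le t : 0 <= t <= 1 -> vtet_kernel t <= sqrt 3 / 2 * vtet_kernel_majorant t.
Proof.
  intros Ht. unfold vtet_kernel. pose proof (vtet_kernel_denom_pos t). pose proof sqrt3_bounds.
  assert (E : vtet_kernel_majorant t * (1 - t + t^2) - 1 = (t - t^2)^3 * (1 - 2*t)^2 / 3)
    by (unfold vtet_kernel_majorant; field).
  assert (0 <= (t - t^2)^3 * (1 - 2*t)^2 / 3)
    by (apply Rdiv_le_0_compat; [apply Rmult_le_pos; [apply pow_le; nra | apply pow2_ge_0] | lra]).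
  unfold Rdiv at 1. apply Rmult_le_compat_l; [lra|].
  apply (Rmult_le_reg_r (1 - t + t^2)); [lra|]. rewrite Rinv_l by lra. lra.
Qed.

Lemma vtet_integrand_le s : 0 <= s <= 1 ->
  vtet_integrand s <= sqrt 3 / 2 * (1 + s/2 - s^3/6 - 3*s^4/5 + 2*s^5/3 - 4*s^6/21).
Proof.
  intros Hs.
  replace (sqrt 3 / 2 * (1 + s/2 - s^3/6 - 3*s^4/5 + 2*s^5/3 - 4*s^6/21))
    with (RInt (fun u => sqrt 3 / 2 * vtet_kernel_majorant (s * u)) 0 1).
  - apply RInt_le; [lra | apply (ex_RInt_param (fun s u => vtet_kernel (s * u))),
                                vtet_kernel_continuity | |].
    + apply ex_RInt_derive. intros. unfold vtet_kernel_majorant. auto_derive. auto.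
    + intros u Hu. apply vtet_kernel_le. split; nra.
  - rewrite (RInt_primitive (fun u => sqrt 3 / 2 * (u + s*u^2/2 - s^3*u^4/6 - 3*s^4*u^5/5
                                                   + 2*s^5*u^6/3 - 4*s^6*u^7/21))).
    + to_R. field.
    + intros x. unfold vtet_kernel_majorant. auto_derive; [easy | field].
    + intros x. unfold vtet_kernel_majorant. auto_derive. auto.
Qed.

Lemma vtet_le : RInt vtet_integrand 0 1 <= sqrt 3 / 2 * (103391/88200).
Proof.
  replace (sqrt 3 / 2 * (103391/88200))
    with (RInt (fun s => sqrt 3 / 2 * (1 + s/2 - s^3/6 - 3*s^4/5 + 2*s^5/3 - 4*s^6/21)) 0 1).
  - apply RInt_le; [lra | apply ex_RInt_continuity, vtet_integrand_continuity | |].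
    + apply ex_RInt_derive. intros. auto_derive. auto.
    + intros s Hs. apply vtet_integrand_le. lra.
  - rewrite (RInt_primitive
               (fun s => sqrt 3 / 2 * (s + s^2/4 - s^4/24 - 3*s^5/25 + s^6/9 - 4*s^7/147))).
    + to_R. field.
    + intros x. auto_derive; [easy | field].
    + intros x. auto_derive. auto.
Qed.

Lemma Ti2_ge t : 0 <= t -> t - t^3/9 <= Ti2 t.
Proof.
  intros Ht.
  replace (t - t^3/9) with (RInt (fun s => t - t^3*s^2/3) 0 1)
    by (rewrite (RInt_primitive (fun s => t*s - t^3*s^3/9));
        [to_R; field | intros; auto_derive; [easy | field] | intros; auto_derive; auto]).
  apply RInt_le; [lra | apply ex_RInt_derive; intros; auto_derive; auto
                 | apply ex_RInt_continuity, atan_quot_continuity |].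
  intros s Hs. unfold atan_quot. destruct (Req_EM_T s 0); [lra|].
  apply (Rmult_le_reg_r s); [lra|].
  replace (atan (t * s) / s * s) with (atan (t * s)) by (field; auto).
  replace ((t - t^3 * s^2 / 3) * s) with (t*s - (t*s)^3/3) by field.
  apply atan_ge_cubic. nra.
Qed.

Lemma mahler_pC0_gt : 20 * (sqrt 3 / 2 * (103391/88200)) < 2*PI * mahler_pC0.
Proof.
  pose proof sqrt3_bounds. pose proof sqrt3_sqr. pose proof PI_gt_314.
  rewrite mahler_pC0_value.
  assert (Hy : 2 - sqrt 3 - (2 - sqrt 3)^3/9 <= Ti2 (2 - sqrt 3)) by (apply Ti2_ge; lra).
  assert (Hz : 2 + sqrt 3 = (1 + sqrt 3 / 3) / (1 - sqrt 3 / 3)).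
  { apply (Rmult_eq_reg_r (1 - sqrt 3 / 3)); [|lra]. field_simplify; lra. }
  assert (Hl : sqrt 3 * (102/135) <= ln (2 + sqrt 3)).
  { rewrite Hz.
    replace (sqrt 3 * (102/135))
      with (2*(sqrt 3/3) + 2*(sqrt 3/3)^3/3 + 2*(sqrt 3/3)^5/5).
    - apply ln_ratio_ge. lra.
    - replace ((sqrt 3/3)^3) with ((sqrt 3 * sqrt 3) * sqrt 3 / 27) by field.
      replace ((sqrt 3/3)^5) with ((sqrt 3 * sqrt 3) * (sqrt 3 * sqrt 3) * sqrt 3 / 243) by field.
      rewrite H0. field. }
  assert ((2 - sqrt 3)^3 <= 0.268^3) by (apply pow_incr; lra).
  assert (4 * 3.14 * 1.3086 < 4 * PI * ln (2 + sqrt 3)).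
  { assert (0 < (PI - 3.14) * (sqrt 3 * (102/135))) by (apply Rmult_lt_0_compat; lra).
    assert (0 <= PI * (ln (2 + sqrt 3) - sqrt 3 * (102/135)))
      by (apply Rmult_le_pos; lra).
    lra. }
  lra.
Qed.

Theorem theorem4p4 :
  exists m d vtet,
    is_mahler_measure pC0 m /\
    is_BlochWigner (0, 2 + sqrt 3) d /\
    is_BlochWigner (cos (PI / 3), sin (PI / 3)) vtet /\
    2 * PI * m = 16 * d + 8 * PI / 3 * ln (2 + sqrt 3) /\
    20 * vtet < 2 * PI * m.
Proof.
  exists mahler_pC0, (Ti2 (2 + sqrt 3) - 5*PI/12 * ln (2 + sqrt 3)), (RInt vtet_integrand 0 1).
  split; [exact is_mahler_measure_pC0|].
  split; [exact is_BlochWigner_i_2_add_sqrt3|].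
  split; [exact is_BlochWigner_exp_i_PI3|].
  pose proof sqrt3_bounds. pose proof sqrt3_sqr.
  assert (Hinv : / (2 + sqrt 3) = 2 - sqrt 3).
  { apply (Rmult_eq_reg_l (2 + sqrt 3)); [|lra]. rewrite Rinv_r by lra. nra. }
  split.
  - rewrite mahler_pC0_value, (Ti2_inv (2 + sqrt 3)), Hinv by lra. field.
  - pose proof vtet_le. pose proof mahler_pC0_gt. lra.
Qed.
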